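(* In the setting described in the context, suppose there is a compact interval $\Delta\subset\mathbb{R}$ such that for every $n\in\mathbb{N}_0$: (a) the polynomial $p_n$ has exactly $n$ simple zeros, all lying inside $\Delta$; (b) the zeros of $p_n$ and $p_{n+1}$ interlace. Then the matrix $J$ satisfies $\sup_{|i-j|\le R}|J_{i,j}|<\infty$ for every $R\ge0$.
   Context: Let $r\ge1$ and let $\mu_1,\dots,\mu_r$ be positive Borel measures on $\mathbb{R}$ with all moments finite, forming a perfect system: for every $\vec n\in\mathbb{N}_0^r$ there is a monic polynomial $P_{\vec n}$ of degree $|\vec n|=n_1+\dots+n_r$ with $\int x^kP_{\vec n}\,d\mu_j=0$ for $0\le k\le n_j-1$, $1\le j\le r$. Fix a path $(\vec n_\ell)_{\ell\ge0}$ with $|\vec n_\ell|=\ell$ and $\vec n_{\ell+1}=\vec n_\ell+\vec e_{i_\ell}$ ($\vec e_j$ the $j$-th unit vector, $i_\ell\in\{1,\dots,r\}$), and set $p_\ell=P_{\vec n_\ell}$. The matrix $J=[J_{\ell,k}]_{\ell,k\ge0}$ is defined by $xp_\ell=\sum_{k=0}^{\ell+1}J_{\ell,k}p_k$, with $J_{\ell,k}=0$ for $k>\ell+1$. *)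

From HB Require Import structures.
From mathcomp Require Import all_boot all_order all_algebra.
From mathcomp Require Import all_classical all_reals all_analysis.
Set Implicit Arguments. Unset Strict Implicit. Unset Printing Implicit Defensive.
Import Order.TTheory GRing.Theory Num.Theory.
Local Open Scope ring_scope.

(* Measures on R (Borel sigma-algebra = sigma-algebra generated by ]a,b]),
   multi-indices are functions 'I_r -> nat. *)

Definition mi_size (r : nat) (n : 'I_r -> nat) : nat := (\sum_(j < r) n j)%N.

Definition finite_moments (R : realType) (mu : {measure set R -> \bar R}) :=
  forall k : nat, mu.-integrable setT (fun x : R => (x ^+ k)%:E).

Definition typeII_MOP (R : realType) (r : nat)
    (mu : 'I_r -> {measure set R -> \bar R}) (n : 'I_r -> nat) (P : {poly R}) :=
  [/\ P \is monic, size P = (mi_size n).+1 &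
      forall (j : 'I_r) (k : nat), (k < n j)%N ->
        (\int[mu j]_x ((x ^+ k * P.[x])%:E) = 0)%E].

Definition perfect_system (R : realType) (r : nat)
    (mu : 'I_r -> {measure set R -> \bar R}) :=
  forall n : 'I_r -> nat, exists! P : {poly R}, typeII_MOP mu n P.

Definition zeros_list (R : realType) (p : {poly R}) (s : seq R) :=
  p != 0 /\ sorted <%R s /\ forall x, root p x <-> x \in s.

Definition interlace (R : realType) (s t : seq R) :=
  size t = (size s).+1 /\
  forall i : nat, (i < size s)%N -> t`_i < s`_i /\ s`_i < t`_i.+1.

From HB Require Import structures.
From mathcomp Require Import all_boot all_order all_algebra.
From mathcomp Require Import all_classical all_reals all_analysis.
Import Order.TTheory GRing.Theory Num.Theory.
From mathcomp Require Import lra zify.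
Local Open Scope ring_scope.

(* Write p_n for the polynomials along the path.  The zeros t_i of p_(n+1)
   interlace those of p_n, so in the partial fraction expansion
   p_n / p_(n+1) = sum_i w_i / (x - t_i) all weights w_i are nonnegative, and
   they sum to 1 because both polynomials are monic.  Hence the quotient of
   x^N p_n by p_(n+1) is sum_i w_i (x^N - t_i^N) / (x - t_i), whose
   coefficients are bounded in terms of N and the interval alone, uniformly in
   n; composing divisions gives the same for the quotient of x^N p_k by
   p_(k+d).  Dividing x^(m+2) p_(l+m) = sum_k J_(l+m,k) x^(m+1) p_k by
   p_(l+m+1) and comparing constant coefficients expresses J_(l+m,l) through
   such quotients and the entries J_(l+m,k), l < k <= l+m, which lie closer to
   the diagonal, so induction on m bounds every subdiagonal of J.  Above the
   diagonal J only has the entries J_(l,l+1) = 1. *)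

Section PolyFacts.
Context {F : fieldType}.

Lemma poly_sum_coefX_wide (D : {poly F}) n :
  (size D <= n)%N -> D = \sum_(i < n) D`_i *: 'X^i.
Proof.
move=> sD; rewrite -poly_def; apply/polyP => k; rewrite coef_poly.
by case: ltnP => // /(leq_trans sD) kD; rewrite nth_default.
Qed.

Lemma divp_mull_expand (D q d : {poly F}) n : (size D <= n)%N ->
  (D * q) %/ d = \sum_(i < n) D`_i *: (('X^i * q) %/ d).
Proof.
move=> /poly_sum_coefX_wide {1}->; rewrite mulr_suml.
rewrite (big_morph (fun r => r %/ d) (divpD d) (div0p d)).
by apply: eq_bigr => i _; rewrite -scalerAl divpZl.
Qed.

Lemma size_sub_monic (P Q : {poly F}) :
  P \is monic -> Q \is monic -> size P = size Q -> (size (P - Q)%R < size Q)%N.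
Proof.
move=> /monicP mP /monicP mQ sPQ; have Q0 : (0 < size Q)%N.
  by rewrite size_poly_gt0 -lead_coef_eq0 mQ oner_neq0.
rewrite -(prednK Q0) ltnS; apply/leq_sizeP => i hi; rewrite coefB.
case: (ltngtP (size Q).-1 i) hi => // [lt _|<- _].
  have Qi : (size Q <= i)%N by rewrite -(prednK Q0).
  by rewrite !nth_default ?subr0 ?sPQ.
by move: mP mQ; rewrite /lead_coef sPQ => -> ->; rewrite subrr.
Qed.

Lemma divp_monic_same_size (P Q : {poly F}) :
  P \is monic -> Q \is monic -> size P = size Q -> P %/ Q = 1.
Proof.
move=> mP mQ sPQ; rewrite -[P](subrK Q) addrC -[Q in Q + _]mul1r.
exact/divp_addl_mul_small/size_sub_monic.
Qed.

End PolyFacts.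

Section LagrangeFactors.
Context {F : fieldType} {n : nat} (t : seq F).
Hypothesis size_t : size t = n.+1.
Hypothesis uniq_t : uniq t.

Definition lagrange_factor (i : 'I_n.+1) : {poly F} :=
  \prod_(k < n) ('X - (t`_(lift i k))%:P).

Lemma prod_XsubC_lagrange_factor (i : 'I_n.+1) :
  \prod_(x <- t) ('X - x%:P) = ('X - (t`_i)%:P) * lagrange_factor i.
Proof. by rewrite (big_nth 0) size_t big_mkord (bigD1_ord i). Qed.

Lemma lagrange_factor_monic i : lagrange_factor i \is monic.
Proof. exact: monic_prod_XsubC. Qed.

Lemma size_lagrange_factor i : size (lagrange_factor i) = n.+1.
Proof. by rewrite size_prod_XsubC [index_enum _]unlock -enumT size_enum_ord. Qed.

Lemma lagrange_factor_root (k i : 'I_n.+1) : k != i -> (lagrange_factor i).[t`_k] = 0.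
Proof.
move=> ki; have : (\prod_(x <- t) ('X - x%:P)).[t`_k] = 0.
  by apply/eqP; rewrite -rootE root_prod_XsubC mem_nth ?size_t.
rewrite (prod_XsubC_lagrange_factor i) hornerM hornerXsubC => /eqP.
by rewrite mulf_eq0 subr_eq0 nth_uniq ?size_t // val_eqE (negbTE ki) => /eqP.
Qed.

Lemma lagrange_factor_neq0 i : (lagrange_factor i).[t`_i] != 0.
Proof.
rewrite horner_prod; apply/prodf_neq0 => k _.
by rewrite hornerXsubC subr_eq0 nth_uniq ?size_t // val_eqE neq_lift.
Qed.

Lemma lagrange_expansion (p : {poly F}) : (size p <= n.+1)%N ->
  p = \sum_(i < n.+1) (p.[t`_i] / (lagrange_factor i).[t`_i]) *: lagrange_factor i.
Proof.
move=> sp; set L := \sum_(i < n.+1) _; apply/eqP; rewrite -subr_eq0.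
apply/contraT => nz; have allt : all (root (p - L)) t.
  apply/(all_nthP 0) => k; rewrite size_t => kn.
  rewrite rootE !hornerE horner_sum (bigD1 (Ordinal kn)) //= big1 => [|i ik].
    by rewrite hornerZ divfK ?lagrange_factor_neq0 // addr0 subrr.
  by rewrite hornerZ (lagrange_factor_root (Ordinal kn) i) ?mulr0 // eq_sym.
suff sL : (size (p - L)%R <= n.+1)%N.
  by have := max_poly_roots nz allt uniq_t; rewrite size_t ltnNge sL.
apply: leq_trans (size_polyD _ _) _; rewrite size_polyN geq_max sp /=.
apply: leq_trans (size_sum _ _ _) _; apply/bigmax_leqP => i _.
by apply: leq_trans (size_scale_leq _ _) _; rewrite size_lagrange_factor.
Qed.

End LagrangeFactors.

Section Interlacing.
Context {R : realType}.

Lemma interlace_lagrange_sign (s t : seq R) (i : 'I_(size s).+1) :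
  sorted <%R t -> interlace s t ->
  0 < (\prod_(x <- s) ('X - x%:P)).[t`_i] * (lagrange_factor t i).[t`_i].
Proof.
move=> st [size_t ts].
have t_le a b : (a <= b <= size s)%N -> t`_a <= t`_b.
  by move=> /andP[ab bs]; rewrite (lt_sorted_leq_nth 0 st) ?inE ?size_t; lia.
have t_lt a b : (a < b <= size s)%N -> t`_a < t`_b.
  by move=> /andP[ab bs]; rewrite (lt_sorted_ltn_nth 0 st) ?inE ?size_t; lia.
have i_le := ltn_ord i; rewrite ltnS in i_le.
rewrite horner_prod (big_nth 0) big_mkord horner_prod -big_split /=.
apply: prodr_gt0 => k _; rewrite !hornerXsubC /=.
have k_lt := ltn_ord k; have [tk_sk sk_tk1] := ts k k_lt.
case: (ltnP k i) => [ki|ik].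
  rewrite /bump leqNgt ki add0n; apply: mulr_gt0; rewrite subr_gt0.
    by apply: lt_le_trans sk_tk1 (t_le _ _ _); rewrite ki.
  by apply: t_lt; rewrite ki.
rewrite /bump ik add1n -mulrNN; apply: mulr_gt0; rewrite oppr_gt0 subr_lt0.
  by apply: le_lt_trans (t_le _ _ _) tk_sk; rewrite ik ltnW.
by apply: t_lt; rewrite ltnS ik.
Qed.

Lemma coef_geometric_sum (x B : R) N e : `|x| <= B -> 1 <= B ->
  `|(\sum_(v < N) 'X^(N.-1 - v) * x%:P ^+ v)`_e| <= N%:R * B ^+ N.
Proof.
move=> xB B1; rewrite coef_sum; apply: le_trans (ler_norm_sum _ _ _) _.
apply: (@le_trans _ _ (\sum_(v < N) B ^+ N)).
  apply: ler_sum => v _.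
  rewrite -polyC_exp coefMC coefXn normrM normrX.
  have B0 : 0 <= B := le_trans ler01 B1.
  case: (_ == _); rewrite ?normr1 ?normr0 ?mul1r ?mul0r ?exprn_ge0 //.
  apply: le_trans (ler_weXn2l B1 (ltnW (ltn_ord v))).
  by apply: lerXn2r; rewrite ?nnegrE.
by rewrite sumr_const card_ord mulr_natl.
Qed.

Lemma coef_divp_Xn_interlace (s t : seq R) (B : R) N e :
  sorted <%R t -> interlace s t -> (forall x, x \in t -> `|x| <= B) -> 1 <= B ->
  `|(('X^N * \prod_(x <- s) ('X - x%:P)) %/ \prod_(x <- t) ('X - x%:P))`_e|
    <= N%:R * B ^+ N.
Proof.
move=> st ist tB B1; have [size_t _] := ist; have uniq_t := lt_sorted_uniq st.
set p := \prod_(x <- s) _; set q := \prod_(x <- t) _.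
pose l := @lagrange_factor R (size s) t.
have q_l (i : 'I_(size s).+1) : q = ('X - (t`_i)%:P) * l i.
  exact: prod_XsubC_lagrange_factor.
pose w (i : 'I_(size s).+1) := p.[t`_i] / (l i).[t`_i].
have w_ge0 (i : 'I_(size s).+1) : 0 <= w i.
  have l_neq0 := lagrange_factor_neq0 t size_t uniq_t i.
  have -> : w i = (p.[t`_i] * (l i).[t`_i]) / (l i).[t`_i] ^+ 2.
    by rewrite /w expr2 invfM mulrA mulfK.
  by rewrite divr_ge0 ?sqr_ge0 ?ltW ?interlace_lagrange_sign.
have p_l : p = \sum_i w i *: l i.
  by apply: lagrange_expansion; rewrite ?size_prod_XsubC.
have w_sum : \sum_i w i = 1.
  have /monicP := monic_prod_XsubC s xpredT id; rewrite /lead_coef size_prod_XsubC /=.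
  rewrite -/p {1}p_l coef_sum => <-; apply: eq_bigr => i _.
  have /monicP := lagrange_factor_monic t i.
  by rewrite coefZ /lead_coef size_lagrange_factor => ->; rewrite mulr1.
pose S (x : R) : {poly R} := \sum_(v < N) 'X^(N.-1 - v) * x%:P ^+ v.
have Xn_l (i : 'I_(size s).+1) : 'X^N * l i = S t`_i * q + t`_i ^+ N *: l i.
  rewrite (q_l i) mulrA [S _ * _]mulrC -subrXX -polyC_exp.
  by rewrite -mul_polyC mulrBl subrK.
have Xn_p : 'X^N * p = (\sum_i w i *: S t`_i) * q + \sum_i (w i * t`_i ^+ N) *: l i.
  rewrite {1}p_l mulr_sumr mulr_suml -big_split; apply: eq_bigr => i _.
  by rewrite -scalerAr Xn_l scalerDr scalerAl scalerA.
rewrite Xn_p divp_addl_mul_small; last first.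
  rewrite size_prod_XsubC size_t ltnS; apply: leq_trans (size_sum _ _ _) _.
  apply/bigmax_leqP => i _; apply: leq_trans (size_scale_leq _ _) _.
  by rewrite size_lagrange_factor.
rewrite coef_sum; apply: le_trans (ler_norm_sum _ _ _) _.
rewrite -[leRHS]mul1r -{1}w_sum mulr_suml; apply: ler_sum => i _.
rewrite coefZ normrM ger0_norm //; apply: ler_wpM2l => //.
by apply: coef_geometric_sum => //; apply/tB/mem_nth; rewrite size_t.
Qed.

Lemma zeros_list_prod {p : {poly R}} {s : seq R} :
  p \is monic -> size p = (size s).+1 -> zeros_list p s ->
  p = \prod_(x <- s) ('X - x%:P).
Proof.
move=> /monicP mp sp [_ [ss rs]].
rewrite [LHS](all_roots_prod_XsubC (rs := s)) ?mp ?scale1r //.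
  by apply/allP => x /rs.
by rewrite uniq_rootsE (lt_sorted_uniq ss).
Qed.

End Interlacing.

Section Quotients.
Context {R : realFieldType} {p : nat -> {poly R}}.
Hypothesis p_monic : forall n, p n \is monic.
Hypothesis size_p : forall n, size (p n) = n.+1.

Let p_neq0 n : p n != 0. Proof. exact: monic_neq0. Qed.

Lemma size_XnM_p N k : size ('X^N * p k) = (N + k).+1.
Proof. by rewrite size_monicM ?monicXn // size_polyXn size_p addnS. Qed.

Definition bounded_quotients d := exists C : nat -> R,
  forall N j e, `|(('X^N * p j) %/ p (j + d))`_e| <= C N.

Lemma bounded_quotients0 : bounded_quotients 0.
Proof.
exists (fun=> 1) => N j e; rewrite addn0 mulpK // coefXn.
by case: (_ == _); rewrite ?normr1 ?normr0 ?ler01.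
Qed.

Lemma bounded_quotientsS d :
  bounded_quotients 1 -> bounded_quotients d -> bounded_quotients d.+1.
Proof.
move=> [C1 hC1] [C hC]; exists (fun N => C1 N * \sum_(i < N) C i) => N j e.
set D := ('X^N * p j) %/ p (j + 1).
have sD : (size D <= N)%N by rewrite size_divp // size_XnM_p size_p; lia.
have -> : ('X^N * p j) %/ p (j + d.+1) = (D * p j.+1) %/ p (j.+1 + d).
  rewrite {1}(divp_eq ('X^N * p j) (p (j + 1))) divpD [X in _ + X]divp_small.
    by rewrite addr0 -/D addn1 addSnnS.
  by apply: leq_trans (ltn_modpN0 _ _) _; rewrite ?size_p //; lia.
rewrite (divp_mull_expand _ _ _ _ sD) coef_sum; apply: le_trans (ler_norm_sum _ _ _) _.
rewrite mulr_sumr; apply: ler_sum => i _; rewrite coefZ normrM.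
by apply: ler_pM; rewrite ?normr_ge0 ?hC1 ?hC.
Qed.

Lemma bounded_quotients_all : bounded_quotients 1 ->
  exists C : nat -> nat -> R,
    forall d N j e, `|(('X^N * p j) %/ p (j + d))`_e| <= C d N.
Proof.
move=> bq1; have bq d : bounded_quotients d.
  by elim: d => [|d]; [exact: bounded_quotients0 | exact: bounded_quotientsS].
by have [C hC] := choice bq; exists C.
Qed.

Context {J : nat -> nat -> R}.
Hypothesis XpE : forall l, 'X * p l = \sum_(k < l.+2) J l k *: p k.

Lemma J_superdiag l : J l l.+1 = 1.
Proof.
have lc n : (p n)`_n = 1 by have /monicP := p_monic n; rewrite /lead_coef size_p.
have := congr1 (fun q : {poly R} => q`_l.+1) (XpE l); rewrite /= coefXM /= lc.
rewrite coef_sum big_ord_recr /= big1 ?add0r => [|k _].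
  by rewrite coefZ lc mulr1.
by rewrite coefZ nth_default ?mulr0 // size_p.
Qed.

Lemma divp_XnM_recurrence N l d :
  ('X^(N.+1) * p l) %/ d = \sum_(k < l.+2) J l k *: (('X^N * p k) %/ d).
Proof.
rewrite exprSr -mulrA XpE mulr_sumr.
rewrite (big_morph (fun r => r %/ d) (divpD d) (div0p d)).
by apply: eq_bigr => k _; rewrite -scalerAr divpZl.
Qed.

Lemma coef0_divp_XnM_row m l :
  (('X^(m.+2) * p (l + m)) %/ p (l + m).+1)`_0 = J (l + m) l +
    \sum_(i < m) J (l + m) (l.+1 + i) * (('X^(m.+1) * p (l.+1 + i)) %/ p (l + m).+1)`_0.
Proof.
pose F k := J (l + m) k * (('X^(m.+1) * p k) %/ p (l + m).+1)`_0.
rewrite divp_XnM_recurrence coef_sum; under eq_bigr do rewrite coefZ.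
rewrite -(big_mkord xpredT F) big_nat_recr //= /F mulpK // coefXn mulr0 addr0.
rewrite (big_cat_nat (n := l)) //= ?leqW ?leq_addr //.
rewrite big_nat_cond big1 ?add0r => [|k /andP[/andP[_ kl] _]]; last first.
  by rewrite divp_small ?coef0 ?mulr0 // size_XnM_p size_p; lia.
rewrite big_ltn ?ltnS ?leq_addr // divp_monic_same_size ?monicMl ?monicXn //.
  rewrite coef1 mulr1 -{1}[l.+1]add0n big_addn big_mkord subSS addKn.
  by congr (_ + _); apply: eq_bigr => i _; rewrite (addnC i).
by rewrite size_XnM_p size_p; lia.
Qed.

Context {C : nat -> nat -> R}.
Hypothesis quotient_bound :
  forall d N j e, `|(('X^N * p j) %/ p (j + d))`_e| <= C d N.

Lemma J_subdiag_step m M :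
  (forall m' l, (m' < m)%N -> `|J (l + m') l| <= M) ->
  exists M', forall l, `|J (l + m) l| <= M'.
Proof.
move=> IH; exists (C 1 m.+2 + \sum_(i < m) M * C (m - i) m.+1) => l.
move: (coef0_divp_XnM_row m l) => /eqP; rewrite -subr_eq => /eqP <-.
apply: le_trans (ler_normB _ _) _; apply: lerD.
  by have := quotient_bound 1 m.+2 (l + m) 0; rewrite addn1.
apply: le_trans (ler_norm_sum _ _ _) _; apply: ler_sum => i _.
have i_lt := ltn_ord i; rewrite normrM; apply: ler_pM; rewrite ?normr_ge0 //.
  have -> : (l + m = l.+1 + i + (m.-1 - i))%N by lia.
  by apply: IH; lia.
have -> : ((l + m).+1 = l.+1 + i + (m - i))%N by lia.
exact: quotient_bound.
Qed.

Lemma J_subdiag_bounded w :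
  exists M, forall m l, (m <= w)%N -> `|J (l + m) l| <= M.
Proof.
elim: w => [|w [M IH]].
  have [M hM] : exists M, forall l, `|J (l + 0) l| <= M.
    by apply: (@J_subdiag_step 0 0).
  by exists M => m l; rewrite leqn0 => /eqP ->.
have [M' hM'] := @J_subdiag_step w.+1 M (fun m' l => IH m' l).
exists (Num.max M M') => m l; rewrite leq_eqVlt => /orP[/eqP -> | mw].
  by rewrite le_max hM' orbT.
by rewrite le_max IH.
Qed.

Hypothesis J_upper : forall l k, (l.+1 < k)%N -> J l k = 0.

Lemma J_band_bounded w : exists M, forall i j, (i <= j + w)%N -> `|J i j| <= M.
Proof.
have [M hM] := J_subdiag_bounded w; exists (Num.max 1 M) => i j ijw.
case: (leqP j i) => [ji | ij].
  by rewrite -(subnKC ji) le_max hM ?orbT //; lia.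
case: (eqVneq j i.+1) => [-> | ne]; first by rewrite J_superdiag normr1 le_max lexx.
by rewrite J_upper ?normr0 ?le_max ?ler01 //; lia.
Qed.

End Quotients.

Arguments bounded_quotients {R} p d.

Theorem theorem3 (R : realType) (r : nat) (hr : (0 < r)%N)
    (mu : 'I_r -> {measure set R -> \bar R})
    (hmom : forall j, finite_moments (mu j))
    (hperf : perfect_system mu)
    (P : ('I_r -> nat) -> {poly R})
    (hP : forall n, typeII_MOP mu n (P n))
    (nv : nat -> ('I_r -> nat)) (ii : nat -> 'I_r)
    (hnv_size : forall l, mi_size (nv l) = l)
    (hnv_step : forall l j, nv l.+1 j = (nv l j + (j == ii l))%N)
    (J : nat -> nat -> R)
    (hJ : forall l, 'X * P (nv l) = \sum_(k < l.+2) J l k *: P (nv k))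
    (hJ0 : forall l k, (l.+1 < k)%N -> J l k = 0)
    (a b : R) (hab : a <= b)
    (hzeros : forall n : nat, exists s : seq R,
        [/\ zeros_list (P (nv n)) s, size s = n,
            forall x, x \in s -> a <= x <= b &
            forall x, root (P (nv n)) x -> ~~ root (P (nv n))^`() x])
    (hinter : forall (n : nat) (s t : seq R),
        zeros_list (P (nv n)) s -> zeros_list (P (nv n.+1)) t -> interlace s t) :
  forall Rr : R, 0 <= Rr ->
    exists M : R, forall i j : nat, `|i%:R - j%:R| <= Rr -> `|J i j| <= M.
Proof.
(* The measures enter only through the monicity and degrees given by hP; the
   simplicity of the zeros already follows from their number. *)
move=> Rr Rr0; pose p n := P (nv n).
have p_monic n : p n \is monic by have [] := hP (nv n).
have size_p n : size (p n) = n.+1 by have [_ -> _] := hP (nv n); rewrite hnv_size.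
have bq1 : bounded_quotients p 1.
  pose B := 1 + `|a| + `|b|; exists (fun N => N%:R * B ^+ N) => N j e.
  have [s [zs s_size _ _]] := hzeros j; have [t [zt t_size t_ab _]] := hzeros j.+1.
  rewrite addn1 (zeros_list_prod (p_monic j) _ zs) ?size_p ?s_size //.
  rewrite (zeros_list_prod (p_monic j.+1) _ zt) ?size_p ?t_size //.
  apply: coef_divp_Xn_interlace (hinter j s t zs zt) _ _; first by case: zt => _ [].
    move=> x /t_ab /andP[ax xb]; rewrite ler_norml /B.
    have := ler_norm (- a); have := ler_norm b; have := normr_ge0 a; have := normr_ge0 b.
    by rewrite normrN => ? ? ? ?; apply/andP; split; lra.
  by rewrite /B -addrA lerDl addr_ge0.
have [C hC] := bounded_quotients_all p_monic size_p bq1.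
have [M hM] := J_band_bounded p_monic size_p hJ hC hJ0 (Num.Def.archi_bound Rr).
exists M => i j ij; apply/hM/ltnW; rewrite -(ltr_nat R) natrD.
have := archi_boundP Rr0; have := ler_norm (i%:R - j%:R : R); lra.
Qed.
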